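(* Consider the multivariate linear model ${\bf y}_i={B^*}^T{\bf x}_i+\boldsymbol\epsilon_i$, $i=1,\dots,n$, with $B^*=(\boldsymbol\beta^*_1,\dots,\boldsymbol\beta^*_r)\in\mathbb{R}^{p\times r}$ an $s$-sparse matrix (all of whose columns are sparse), errors $\boldsymbol\epsilon_i$ with mean zero independent of the covariates, and $E[X^TX/n]\in\mathbb{R}^{p\times p}$ positive definite. Fix a partition $D=(D_1,\dots,D_Q)$ of $\{1,\dots,r\}$ and $\gamma\ge0$. Define $$\acute B=(\acute{\boldsymbol\beta}_1,\dots,\acute{\boldsymbol\beta}_r)=\arg\min_{\boldsymbol\beta_1,\dots,\boldsymbol\beta_r\in\mathbb{R}^p} E\left(\frac{1}{2n}\sum_{i=1}^n\sum_{c=1}^r (y_{ic}-{\bf x}_i^T\boldsymbol\beta_c)^2+\frac{\gamma}{2n}\sum_{q=1}^Q\frac{1}{|D_q|}\sum_{l,m\in D_q}\|X(\boldsymbol\beta_l-\boldsymbol\beta_m)\|_2^2\right).$$ Then for every $q$ and $l\in D_q$, $$\acute{\boldsymbol\beta}_l=\boldsymbol\beta^*_l+\frac{2\gamma}{(1+2\gamma)|D_q|}\sum_{c\in D_q,\,c\neq l}(\boldsymbol\beta^*_c-\boldsymbol\beta^*_l).$$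
   Context: $X=({\bf x}_1,\dots,{\bf x}_n)^T\in\mathbb{R}^{n\times p}$ is the design matrix, $y_{ic}$ the $c$th coordinate of ${\bf y}_i$. ''$s$-sparse'' means $B^*$ has $s$ nonzero entries. The inner sum $\sum_{l,m\in D_q}$ runs over all ordered pairs in $D_q$. The expectation is over the data generated by the model. *)

From HB Require Import structures.
From mathcomp Require Import all_boot all_order all_algebra.
From mathcomp Require Import all_classical all_reals all_analysis.
Set Implicit Arguments. Unset Strict Implicit. Unset Printing Implicit Defensive.
Import Order.TTheory GRing.Theory Num.Theory.
Local Open Scope classical_set_scope.
Local Open Scope ring_scope.

Definition indep_vec {d} {T : measurableType d} {R : realType}
  (P : probability T R) (I J : finType) (U : I -> T -> R) (V : J -> T -> R) :=
  forall (A : I -> set R) (B : J -> set R),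
    (forall i, measurable (A i)) -> (forall j, measurable (B j)) ->
    P ([set w | forall i, A i (U i w)] `&` [set w | forall j, B j (V j w)])
    = (P [set w | forall i, A i (U i w)] * P [set w | forall j, B j (V j w)])%E.

Definition posdef {R : realType} (p : nat) (S : 'M[R]_p) :=
  S^T = S /\ forall v : 'cV[R]_p, v != 0 -> 0 < (v^T *m S *m v) 0 0.

Definition nnz {R : realType} (p r : nat) (B : 'M[R]_(p, r)) : nat :=
  #|[set ij : 'I_p * 'I_r | B ij.1 ij.2 != 0]|.

Definition gram {d} {T : measurableType d} {R : realType} (P : probability T R)
  (n p : nat) (X : 'I_n -> 'I_p -> T -> R) : 'M[R]_p :=
  \matrix_(j, k) (fine ('E_P[fun w => \sum_(i < n) X i j w * X i k w]) / n%:R).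

Definition obj {d} {T : measurableType d} {R : realType} (n p r : nat)
  (X : 'I_n -> 'I_p -> T -> R) (Y : 'I_n -> 'I_r -> T -> R)
  (D : {set {set 'I_r}}) (gamma : R) (B : 'M[R]_(p, r)) (w : T) : R :=
  (2 * n%:R)^-1 * \sum_(i < n) \sum_(c < r)
       (Y i c w - \sum_(j < p) X i j w * B j c) ^+ 2
  + gamma / (2 * n%:R) * \sum_(Dq in D) (#|Dq|%:R)^-1 *
       \sum_(l in Dq) \sum_(m in Dq)
          \sum_(i < n) (\sum_(j < p) X i j w * (B j l - B j m)) ^+ 2.

From HB Require Import structures.
From mathcomp Require Import all_boot all_order all_algebra.
From mathcomp Require Import all_classical all_reals all_analysis.
From mathcomp Require Import measurable_realfun.
From mathcomp Require Import ring lra.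
Import Order.TTheory GRing.Theory Num.Theory.
Local Open Scope classical_set_scope.
Local Open Scope ring_scope.

(* Write [G = E[X^T X / n]] and [|v|_G^2 = v^T G v].  Because the noise is
   centred and independent of the design, the cross terms vanish and
   [E[obj B] = const + R(B) / 2] with
     [R(B) = sum_c |b_c - b*_c|_G^2
             + gamma sum_q |D_q|^-1 sum_(l, m in D_q) |b_l - b_m|_G^2].
   Along every line [B + t H] this risk is a quadratic polynomial in [t], so at
   a minimiser its linear coefficient vanishes.  Taking [H = w e_l^T] and using
   that [G] is positive definite gives, for [l] in [D_q], the stationarity
   equations [b_l - b*_l + (2 gamma / |D_q|) sum_(m in D_q) (b_l - b_m) = 0].
   Summing them over [D_q] shows that [b] and [b*] have the same sum over the
   group, after which each equation is solved for [b_l]. *)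

Section bilinear_form.
Context {R : comPzRingType} {p : nat} (G : 'M[R]_p).

Definition bform (u v : 'cV[R]_p) : R := (u^T *m G *m v) 0 0.

Lemma bformE u v : bform u v = \sum_(j < p) \sum_(k < p) u j 0 * G j k * v k 0.
Proof.
rewrite /bform mxE exchange_big; apply: eq_bigr => k _.
by rewrite mxE mulr_suml; apply: eq_bigr => j _; rewrite !mxE.
Qed.

Lemma bformDl u1 u2 v : bform (u1 + u2) v = bform u1 v + bform u2 v.
Proof. by rewrite /bform linearD !mulmxDl mxE. Qed.

Lemma bformDr u v1 v2 : bform u (v1 + v2) = bform u v1 + bform u v2.
Proof. by rewrite /bform mulmxDr mxE. Qed.

Lemma bformZl a u v : bform (a *: u) v = a * bform u v.
Proof. by rewrite /bform linearZ /= -!scalemxAl mxE. Qed.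

Lemma bformZr a u v : bform u (a *: v) = a * bform u v.
Proof. by rewrite /bform -scalemxAr mxE. Qed.

Lemma bformNl u v : bform (- u) v = - bform u v.
Proof. by rewrite -scaleN1r bformZl mulN1r. Qed.

Lemma bform_suml (I : Type) (s : seq I) (Pr : pred I) (F : I -> 'cV[R]_p) v :
  bform (\sum_(i <- s | Pr i) F i) v = \sum_(i <- s | Pr i) bform (F i) v.
Proof. by rewrite /bform linear_sum /= !mulmx_suml summxE. Qed.

Hypothesis symG : G^T = G.

Lemma bformC u v : bform u v = bform v u.
Proof.
have trE (M : 'M[R]_1) : M 0 0 = M^T 0 0 by rewrite mxE.
by rewrite /bform [RHS]trE !trmx_mul trmxK symG mulmxA.
Qed.

Lemma bform_line u v t :
  bform (u + t *: v) (u + t *: v) = bform u u + t * (2 * bform u v) + t ^+ 2 * bform v v.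
Proof. by rewrite bformDl !bformDr !bformZl !bformZr [bform v u]bformC; ring. Qed.

End bilinear_form.

Lemma col_delta {R : pzRingType} {p r : nat} (w : 'cV[R]_p) (l c : 'I_r) :
  col c (w *m delta_mx 0 l) = (c == l)%:R *: w.
Proof.
by apply/matrixP => j k; rewrite (ord1 k) !mxE big_ord1 !mxE eqxx /= mulr_natl mulr_natr.
Qed.

Section quadratic.
Context {R : realFieldType}.

Definition quadratic (f : R -> R) (a b c : R) := forall t, f t = a + t * b + t ^+ 2 * c.

Lemma quadraticD f g a b c a' b' c' : quadratic f a b c -> quadratic g a' b' c' ->
  quadratic (fun t => f t + g t) (a + a') (b + b') (c + c').
Proof. by move=> qf qg t; rewrite qf qg; ring. Qed.

Lemma quadraticZ k f a b c : quadratic f a b c ->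
  quadratic (fun t => k * f t) (k * a) (k * b) (k * c).
Proof. by move=> qf t; rewrite qf; ring. Qed.

Lemma quadratic_sum (I : Type) (s : seq I) (Pr : pred I) (F : I -> R -> R) a b c :
  (forall i, quadratic (F i) (a i) (b i) (c i)) ->
  quadratic (fun t => \sum_(i <- s | Pr i) F i t)
    (\sum_(i <- s | Pr i) a i) (\sum_(i <- s | Pr i) b i) (\sum_(i <- s | Pr i) c i).
Proof. by move=> qF t; under eq_bigr do rewrite qF; rewrite !big_split /= -!mulr_sumr. Qed.

(* The test point [t = - b / (|c| + 1)] makes [t b + t^2 c] negative unless [b = 0]. *)
Lemma quadratic_min0 f a b c : quadratic f a b c -> (forall t, a <= f t) -> b = 0.
Proof.
move=> qf fmin; apply/eqP; apply: contraT => b_neq0.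
have c1_gt0 : 0 < `|c| + 1 by rewrite ltr_wpDl.
pose t := - b / (`|c| + 1).
have : 0 <= (f t - a) * (`|c| + 1) ^+ 2 by rewrite mulr_ge0 ?sqr_ge0 ?subr_ge0.
have -> : (f t - a) * (`|c| + 1) ^+ 2 = b ^+ 2 * (c - `|c| - 1).
  by rewrite qf /t; field; rewrite gt_eqF.
have b2_gt0 : 0 < b ^+ 2 by rewrite lt_def sqrf_eq0 b_neq0 sqr_ge0.
have c_lt : c - `|c| - 1 < 0 by have := ler_norm c; lra.
by rewrite pmulr_rge0 // leNgt c_lt.
Qed.

End quadratic.

Lemma sum_delta {R : pzSemiRingType} {I : finType} (P : pred I) (i0 : I) (F : I -> R) :
  P i0 -> \sum_(i | P i) (i == i0)%:R * F i = F i0.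
Proof.
move=> Pi0; rewrite (bigD1 i0) //= eqxx mul1r big1 ?addr0 // => i /andP[_ /negbTE ->].
by rewrite mul0r.
Qed.

Lemma sum_pair_delta {R : pzRingType} {I : finType} (A : {pred I}) (i0 : I) (F : I -> I -> R) :
  i0 \in A ->
  \sum_(l in A) \sum_(m in A) ((l == i0)%:R - (m == i0)%:R) * F l m =
  \sum_(m in A) (F i0 m - F m i0).
Proof.
move=> Ai0; under eq_bigr do under eq_bigr do rewrite mulrBl.
under eq_bigr do rewrite sumrB.
rewrite !sumrB; congr (_ - _); last by apply: eq_bigr => l _; rewrite sum_delta.
by under eq_bigr do rewrite -mulr_sumr; rewrite sum_delta.
Qed.

Lemma posdef_bform_eq0 {R : numDomainType} {p : nat} (G : 'M[R]_p) (u : 'cV[R]_p) :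
  (forall v : 'cV[R]_p, v != 0 -> 0 < (v^T *m G *m v) 0 0) ->
  (forall w, bform G u w = 0) -> u = 0.
Proof.
by move=> Gpos u0; apply/eqP; apply: contraT => /Gpos; rewrite -/(bform G u u) u0 ltxx.
Qed.

Lemma fusion_fixed_point {F : fieldType} {I : finType} (A : {pred I}) (a b : I -> F) (k : F) :
  1 + k * #|A|%:R != 0 ->
  (forall l, l \in A -> a l - b l + k * \sum_(m in A) (a l - a m) = 0) ->
  forall l, l \in A -> a l = b l + k / (1 + k * #|A|%:R) * \sum_(c in A | c != l) (b c - b l).
Proof.
move=> kN_neq0 fixA l Al; set N := #|A|%:R.
have sum_diff (f : I -> F) x : \sum_(m in A) (x - f m) = x * N - \sum_(m in A) f m.
  by rewrite sumrB sumr_const mulr_natr.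
have sum_ab : \sum_(m in A) a m = \sum_(m in A) b m.
  have dbl : \sum_(l in A) \sum_(m in A) (a l - a m) = 0.
    under eq_bigr do rewrite sumrB.
    by apply/eqP; rewrite sumrB subr_eq0; apply/eqP; exact: exchange_big.
  have : \sum_(l in A) (a l - b l + k * \sum_(m in A) (a l - a m)) = 0 by exact: big1.
  rewrite big_split /= -mulr_sumr dbl mulr0 addr0 sumrB => /eqP.
  by rewrite subr_eq0 => /eqP.
have := fixA l Al; rewrite sum_diff sum_ab.
have -> : \sum_(c in A | c != l) (b c - b l) = \sum_(m in A) b m - b l * N.
  by rewrite /N mulr_natr -sumr_const -sumrB [RHS](bigD1 l) //= subrr add0r.
move=> fix_l; apply/eqP; rewrite -subr_eq0; apply/eqP; apply: (mulIf kN_neq0).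
by rewrite mul0r -[RHS]fix_l /N; field.
Qed.

Section fused_risk.
Context {R : realFieldType} {p r : nat} (G : 'M[R]_p) (Bstar : 'M[R]_(p, r))
  (D : {set {set 'I_r}}) (gamma : R).
Local Notation bf := (bform G).

Definition fused_risk (B : 'M[R]_(p, r)) : R :=
  \sum_(c < r) bf (col c (B - Bstar)) (col c (B - Bstar)) +
  gamma * \sum_(Dq in D) #|Dq|%:R^-1 *
    \sum_(l in Dq) \sum_(m in Dq) bf (col l B - col m B) (col l B - col m B).

Hypothesis partD : finset.partition D [set: 'I_r].

Definition fused_risk_diff (B H : 'M[R]_(p, r)) : R :=
  \sum_(c < r) 2 * bf (col c (B - Bstar)) (col c H) +
  gamma * \sum_(Dq in D) #|Dq|%:R^-1 *
    \sum_(l in Dq) \sum_(m in Dq) 2 * bf (col l B - col m B) (col l H - col m H).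

Lemma fused_risk_diff_delta Dq l0 B w : Dq \in D -> l0 \in Dq ->
  fused_risk_diff B (w *m delta_mx 0 l0) =
  2 * bf (col l0 (B - Bstar) +
          (2 * gamma / #|Dq|%:R) *: \sum_(m in Dq) (col l0 B - col m B)) w.
Proof.
move=> DqD l0Dq; have /and3P[_ /finset.trivIsetP trivD _] := partD.
set H := w *m delta_mx 0 l0.
have colHB l m : col l H - col m H = ((l == l0)%:R - (m == l0)%:R) *: w.
  by rewrite !col_delta scalerBl.
have block_l0 : \sum_(l in Dq) \sum_(m in Dq) 2 * bf (col l B - col m B) (col l H - col m H)
    = 4 * \sum_(m in Dq) bf (col l0 B - col m B) w.
  under eq_bigr do under eq_bigr do rewrite colHB bformZr mulrCA.
  rewrite sum_pair_delta // mulr_sumr; apply: eq_bigr => m _.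
  by rewrite -[col m B - _]opprB bformNl; ring.
have block_other Dq' : Dq' \in D -> Dq' != Dq ->
    \sum_(l in Dq') \sum_(m in Dq') 2 * bf (col l B - col m B) (col l H - col m H) = 0.
  move=> Dq'D neq; have l0Dq' : l0 \notin Dq'.
    by rewrite (disjointFl (trivD _ _ Dq'D DqD neq) l0Dq).
  have neq_l0 l : l \in Dq' -> (l == l0) = false.
    by move=> lDq'; apply: contraNF l0Dq' => /eqP <-.
  apply: big1 => l lDq'; apply: big1 => m mDq'.
  by rewrite colHB !neq_l0 // subrr scale0r /bform mulmx0 mxE mulr0.
have fit : \sum_(c < r) 2 * bf (col c (B - Bstar)) (col c H) = 2 * bf (col l0 (B - Bstar)) w.
  by under eq_bigr do rewrite col_delta bformZr mulrCA; rewrite sum_delta.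
have Dq_neq0 : #|Dq|%:R != 0 :> R.
  by rewrite pnatr_eq0 -lt0n card_gt0; apply/set0Pn; exists l0.
rewrite /fused_risk_diff fit (bigD1 Dq) //= block_l0 [X in _ * (_ + X)]big1 ?addr0; last first.
  by move=> Dq' /andP[Dq'D neq]; rewrite block_other ?mulr0.
by rewrite bformDl bformZl bform_suml; field; exact: Dq_neq0.
Qed.

Hypothesis symG : G^T = G.

Lemma fused_risk_line B H : exists c,
  quadratic (fun t => fused_risk (B + t *: H)) (fused_risk B) (fused_risk_diff B H) c.
Proof.
have line u v (x : R -> 'cV[R]_p) : (forall t, x t = u + t *: v) ->
    quadratic (fun t => bf (x t) (x t)) (bf u u) (2 * bf u v) (bf v v).
  by move=> xE t; rewrite xE bform_line.
eexists; apply: quadraticD.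
  apply: quadratic_sum => c; apply: line => t.
  by rewrite addrAC linearD linearZ.
apply: quadraticZ; apply: quadratic_sum => Dq; apply: quadraticZ.
apply: quadratic_sum => l; apply: quadratic_sum => m; apply: line => t.
by rewrite !linearD !linearZ /= addrACA.
Qed.

Lemma fused_risk_min_diff B : (forall B', fused_risk B <= fused_risk B') ->
  forall H, fused_risk_diff B H = 0.
Proof.
move=> Bmin H; have [c BH] := fused_risk_line B H.
exact: quadratic_min0 BH (fun t => Bmin _).
Qed.

Hypothesis Gpos : forall v : 'cV[R]_p, v != 0 -> 0 < (v^T *m G *m v) 0 0.

Lemma fused_risk_argmin_stationary Bac : (forall B, fused_risk Bac <= fused_risk B) ->
  forall Dq, Dq \in D -> forall l, l \in Dq ->
  col l (Bac - Bstar) + (2 * gamma / #|Dq|%:R) *: \sum_(m in Dq) (col l Bac - col m Bac) = 0.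
Proof.
move=> Bac_min Dq DqD l lDq; apply: posdef_bform_eq0 Gpos _ => w.
have := fused_risk_min_diff _ Bac_min (w *m delta_mx 0 l).
by rewrite (fused_risk_diff_delta _ _ _ _ DqD lDq) => /eqP; rewrite mulf_eq0 pnatr_eq0 => /eqP.
Qed.

Lemma fused_risk_argmin Bac : 0 <= gamma -> (forall B, fused_risk Bac <= fused_risk B) ->
  forall Dq, Dq \in D -> forall l, l \in Dq ->
  col l Bac = col l Bstar + (2 * gamma / ((1 + 2 * gamma) * #|Dq|%:R)) *:
                \sum_(c in Dq | c != l) (col c Bstar - col l Bstar).
Proof.
move=> gamma_ge0 Bac_min Dq DqD l lDq.
have Dq_neq0 : #|Dq|%:R != 0 :> R.
  by rewrite pnatr_eq0 -lt0n card_gt0; apply/set0Pn; exists l.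
have gamma1_neq0 : 1 + 2 * gamma != 0 by rewrite gt_eqF //; lra.
apply/matrixP => j z; rewrite (ord1 z) !mxE summxE.
under eq_bigr do rewrite !mxE.
have -> : 2 * gamma / ((1 + 2 * gamma) * #|Dq|%:R) =
          (2 * gamma / #|Dq|%:R) / (1 + 2 * gamma / #|Dq|%:R * #|Dq|%:R).
  by rewrite divfK //; field; rewrite gamma1_neq0 Dq_neq0.
apply: fusion_fixed_point => //; first by rewrite divfK.
move=> l' l'Dq; have := fused_risk_argmin_stationary _ Bac_min _ DqD _ l'Dq.
move/(congr1 (fun M : 'cV[R]_p => M j 0)).
by rewrite !mxE summxE; under eq_bigr do rewrite !mxE.
Qed.

End fused_risk.

Section independence.
Context {d} {T : measurableType d} {R : realType} (P : probability T R).
Local Open Scope ereal_scope.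

Lemma coord_cylinder {I : finType} (U : I -> T -> R) (i : I) (A : set R) :
  [set w | forall k, (if k == i then A else setT) (U k w)] = U i @^-1` A.
Proof.
apply/seteqP; split => w /=; first by move/(_ i); rewrite eqxx.
by move=> Aw k; case: eqP => // ->.
Qed.

Lemma indep_vec_coord {I J : finType} {U : I -> T -> R} {V : J -> T -> R}
    (i : I) (j : J) (A B : set R) :
  indep_vec P U V -> measurable A -> measurable B ->
  P (U i @^-1` A `&` V j @^-1` B) = P (U i @^-1` A) * P (V j @^-1` B).
Proof.
move=> UV mA mB; rewrite -(coord_cylinder U i) -(coord_cylinder V j).
by apply: (UV (fun k => if k == i then A else setT) (fun k => if k == j then B else setT))
  => k; case: ifP.
Qed.

(* The joint law of [(U, V)] is the product of the marginals, so Fubini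
   integrates out [V] first. *)
Lemma indep_mean0_mul {U V : T -> R} :
  measurable_fun setT U -> measurable_fun setT V ->
  (forall A B, measurable A -> measurable B ->
     P (U @^-1` A `&` V @^-1` B) = P (U @^-1` A) * P (V @^-1` B)) ->
  V \in Lfun P 1 -> (U \* V)%R \in Lfun P 1 -> 'E_P[V] = 0 -> 'E_P[U \* V] = 0.
Proof.
move=> mU mV UV /Lfun1_integrable iV /Lfun1_integrable iUV.
rewrite unlock => EV0.
pose Um : {mfun T >-> R} := mfun_Sub (mem_set mU).
pose Vm : {mfun T >-> R} := mfun_Sub (mem_set mV).
pose W : {mfun T >-> (R * R)%type} := mfun_Sub (mem_set (measurable_fun_pair mU mV)).
pose mu := distribution P Um \x distribution P Vm.
have lawW S : measurable S -> mu S = distribution P W S.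
  by move: S; apply: product_measure_unique => A B mA mB; rewrite /= -UV.
pose f := fun z : (R * R)%type => (z.1 * z.2)%:E.
have mf : measurable_fun [set: (R * R)%type] f.
  by apply/measurable_EFinP; apply: measurable_funM; [exact: measurable_fst|exact: measurable_snd].
have imu : mu.-integrable setT f.
  apply/integrableP; split => //.
  rewrite (eq_measure_integral (distribution P W)); last by move=> A mA _; exact: lawW.
  rewrite ge0_integral_distribution //; first by move/integrableP : iUV => [].
  exact: measurableT_comp.
rewrite (_ : \int[P]_w _ = \int[P]_w (f \o W) w) //.
rewrite -integral_distribution //.
rewrite (eq_measure_integral mu); last by move=> A mA _; exact/esym/lawW.
rewrite -(integral12_prod_meas1 imu); apply: integral0_eq => x _.
rewrite /fubini_F /f /= integral_distribution //=.
- under eq_integral do rewrite EFinM.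
  by rewrite integralZl // EV0 mule0.
- by apply/measurable_EFinP; exact: measurable_funM.
- by under eq_fun do rewrite EFinM; exact: integrableZl.
Qed.

End independence.

Section real_expectation.
Context {d} {T : measurableType d} {R : realType} (P : probability T R).
Local Notation L1 := (Lfun P 1).
Local Notation L2 := (Lfun P 2%:E).

Lemma Lfun2P (f : T -> R) : measurable_fun setT f ->
  P.-integrable setT (fun w => (f w ^+ 2)%:E) -> f \in L2.
Proof.
move=> mf /integrableP[_ f2_fin].
rewrite inE; apply/andP; split; first by rewrite inE.
rewrite inE /= /finite_norm unlock; apply: poweR_lty.
rewrite (_ : (fun x => _) = (fun w => `|(f w ^+ 2)%:E|%E)) //.
by apply/funext => w /=; rewrite powR_mulrn // normrX.
Qed.

(* Instance inference cannot supply the proof of [1 <= 2%:E] that the submodule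
   structure of [Lfun P 2%:E] depends on, so closure under the vector-space
   operations is read off [Lfun_submod_closed] by hand. *)
Lemma Lfun2_mulr (f : T -> R) (k : R) : f \in L2 -> (fun w => f w * k) \in L2.
Proof.
have [L2_0 L2_lin] := Lfun_submod_closed P (lee1n 2).
by move=> L2f; have := L2_lin k f 0 L2f L2_0; rewrite addr0; under eq_fun do rewrite mulrC.
Qed.

Lemma Lfun2B (f g : T -> R) : f \in L2 -> g \in L2 -> (fun w => f w - g w) \in L2.
Proof.
have [_ L2_lin] := Lfun_submod_closed P (lee1n 2).
by move=> L2f L2g; have := L2_lin (-1) g f L2g L2f; rewrite scaleN1r addrC.
Qed.

Lemma Lfun2_sum (I : Type) (s : seq I) (Pr : pred I) (F : I -> T -> R) :
  (forall i, F i \in L2) -> (fun w => \sum_(i <- s | Pr i) F i w) \in L2.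
Proof.
have [L2_0 L2_lin] := Lfun_submod_closed P (lee1n 2).
move=> L2F; rewrite -fct_sumE; apply: (big_ind (fun f => f \in L2)) => // f g L2f L2g.
by have := L2_lin 1 f g L2f L2g; rewrite scale1r.
Qed.

Lemma Lfun1_sum (I : Type) (s : seq I) (Pr : pred I) (F : I -> T -> R) :
  (forall i, F i \in L1) -> (fun w => \sum_(i <- s | Pr i) F i w) \in L1.
Proof. by move=> L1F; rewrite -fct_sumE; exact: rpred_sum. Qed.

Lemma Lfun1Z (k : R) (f : T -> R) : f \in L1 -> (fun w => k * f w) \in L1.
Proof. exact: rpredZ. Qed.

Lemma Lfun1_sqr (f : T -> R) : f \in L2 -> (fun w => f w ^+ 2) \in L1.
Proof. by move=> L2f; under eq_fun do rewrite expr2; exact: Lfun2_mul_Lfun1. Qed.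

Definition mean (f : T -> R) : R := fine ('E_P[f])%E.

Lemma meanE f : f \in L1 -> ('E_P[f] = (mean f)%:E)%E.
Proof. by move=> L1f; rewrite fineK // expectation_fin_num. Qed.

Lemma meanD f g : f \in L1 -> g \in L1 -> mean (f \+ g) = mean f + mean g.
Proof. by move=> L1f L1g; rewrite /mean expectationD // fineD ?expectation_fin_num. Qed.

Lemma meanZ k f : f \in L1 -> mean (fun w => k * f w) = k * mean f.
Proof.
move=> L1f; rewrite /mean (_ : (fun w => k * f w) = k \o* f); last first.
  by apply/funext => w /=; rewrite mulrC.
by rewrite expectationZl // fineM ?expectation_fin_num.
Qed.

Lemma mean_sum (I : Type) (s : seq I) (Pr : pred I) (F : I -> T -> R) :
  (forall i, F i \in L1) ->
  mean (fun w => \sum_(i <- s | Pr i) F i w) = \sum_(i <- s | Pr i) mean (F i).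
Proof.
move=> L1F; rewrite -fct_sumE.
pose K f x := f \in L1 /\ mean f = x.
suff [] : K (\sum_(i <- s | Pr i) F i) (\sum_(i <- s | Pr i) mean (F i)) by [].
apply: big_ind2 => [|f x g y [L1f <-] [L1g <-]|i _] //.
- by split; [exact: rpred0|rewrite /mean (expectation_cst P 0)].
- by split; [exact: rpredD|exact: meanD].
Qed.

End real_expectation.

Section linear_model.
Context {d} {T : measurableType d} {R : realType} (P : probability T R)
  {n p r : nat} {X : 'I_n -> 'I_p -> T -> R} {eps : 'I_n -> 'I_r -> T -> R}.
Hypotheses (n_gt0 : (0 < n)%N)
  (mX : forall i j, measurable_fun setT (X i j))
  (meps : forall i c, measurable_fun setT (eps i c))
  (iX : forall i j, P.-integrable setT (fun w => ((X i j w) ^+ 2)%:E))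
  (ieps : forall i c, P.-integrable setT (fun w => ((eps i c w) ^+ 2)%:E))
  (eps_mean0 : forall i c, ('E_P[eps i c] = 0)%E)
  (X_eps_indep : indep_vec P (fun ij : 'I_n * 'I_p => X ij.1 ij.2)
                             (fun ic : 'I_n * 'I_r => eps ic.1 ic.2)).
Local Notation L1 := (Lfun P 1).
Local Notation L2 := (Lfun P 2%:E).
Local Notation mean := (mean P).
Local Notation G := (gram P X).

Definition xdot i (v : 'cV[R]_p) (w : T) : R := \sum_(j < p) X i j w * v j 0.

Lemma X_L2 i j : X i j \in L2. Proof. exact: Lfun2P. Qed.

Lemma eps_L2 i c : eps i c \in L2. Proof. exact: Lfun2P. Qed.

Lemma xdot_L2 i v : xdot i v \in L2.
Proof. by apply: Lfun2_sum => j; apply: Lfun2_mulr; exact: X_L2. Qed.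

Lemma mean_eps_X i c j : mean (fun w => eps i c w * X i j w) = 0.
Proof.
rewrite /mean (_ : (fun w => _) = (X i j \* eps i c)); last first.
  by apply/funext => w /=; rewrite mulrC.
rewrite (indep_mean0_mul P (mX i j) (meps i c)) //.
- by move=> A B mA mB; exact: (indep_vec_coord P (i, j) (i, c) A B X_eps_indep).
- by apply: Lfun_subset12; [exact: fin_num_measure|exact: eps_L2].
- by apply: Lfun2_mul_Lfun1; [exact: X_L2|exact: eps_L2].
Qed.

Lemma mean_eps_xdot i c v : mean (fun w => eps i c w * xdot i v w) = 0.
Proof.
rewrite (_ : (fun w => _) = (fun w => \sum_(j < p) v j 0 * (eps i c w * X i j w))).
  have L1_epsX j : (fun w => eps i c w * X i j w) \in L1.
    by apply: Lfun2_mul_Lfun1; [exact: eps_L2|exact: X_L2].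
  rewrite mean_sum => [|j]; last exact: Lfun1Z.
  by apply: big1 => j _; rewrite meanZ ?mean_eps_X ?mulr0.
by apply/funext => w; rewrite /xdot mulr_sumr; apply: eq_bigr => j _; ring.
Qed.

Lemma mean_xdot_mul i a b : mean (fun w => xdot i a w * xdot i b w) =
  \sum_(j < p) \sum_(k < p) a j 0 * b k 0 * mean (fun w => X i j w * X i k w).
Proof.
have L1XX j k : (fun w => X i j w * X i k w) \in L1.
  by apply: Lfun2_mul_Lfun1; exact: X_L2.
rewrite (_ : (fun w => _) =
  (fun w => \sum_(j < p) \sum_(k < p) a j 0 * b k 0 * (X i j w * X i k w))).
  rewrite mean_sum => [|j]; last by apply: Lfun1_sum => k; exact: Lfun1Z.
  apply: eq_bigr => j _; rewrite mean_sum => [|k]; last exact: Lfun1Z.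
  by apply: eq_bigr => k _; rewrite meanZ.
apply/funext => w; rewrite /xdot mulr_suml; apply: eq_bigr => j _.
by rewrite mulr_sumr; apply: eq_bigr => k _; ring.
Qed.

Lemma sum_mean_xdot_mul a b :
  \sum_(i < n) mean (fun w => xdot i a w * xdot i b w) = n%:R * bform G a b.
Proof.
have n_neq0 : n%:R != 0 :> R by rewrite pnatr_eq0 -lt0n.
have sum_XX j k : \sum_(i < n) mean (fun w => X i j w * X i k w) = n%:R * G j k.
  rewrite mxE -[fine _]/(mean (fun w => \sum_(i < n) X i j w * X i k w)).
  rewrite mean_sum => [|i]; last by apply: Lfun2_mul_Lfun1; exact: X_L2.
  by field.
under eq_bigr do rewrite mean_xdot_mul.
rewrite bformE exchange_big mulr_sumr; apply: eq_bigr => j _.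
rewrite exchange_big mulr_sumr; apply: eq_bigr => k _.
by rewrite -mulr_sumr sum_XX; ring.
Qed.

Lemma sum_mean_xdot_sqr v :
  \sum_(i < n) mean (fun w => xdot i v w ^+ 2) = n%:R * bform G v v.
Proof. by rewrite -sum_mean_xdot_mul; under eq_bigr do under eq_fun do rewrite expr2. Qed.

Lemma xdot_sqr_L1 i v : (fun w => xdot i v w ^+ 2) \in L1.
Proof. exact/Lfun1_sqr/xdot_L2. Qed.

Lemma mean_sqr_noise_sub i c v :
  mean (fun w => (eps i c w - xdot i v w) ^+ 2) =
  mean (fun w => eps i c w ^+ 2) + mean (fun w => xdot i v w ^+ 2).
Proof.
have L1_cross : (fun w => eps i c w * xdot i v w) \in L1.
  by apply: Lfun2_mul_Lfun1; [exact: eps_L2|exact: xdot_L2].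
have L1_eps2 : (fun w => eps i c w ^+ 2) \in L1 by exact/Lfun1_sqr/eps_L2.
rewrite (_ : (fun w => _) = (fun w => (eps i c w ^+ 2 + -2 * (eps i c w * xdot i v w))
                                      + xdot i v w ^+ 2)); last first.
  by apply/funext => w; ring.
rewrite meanD ?meanD ?meanZ ?mean_eps_xdot ?mulr0 ?addr0 //; last exact: xdot_sqr_L1.
- exact: Lfun1Z.
- by apply: rpredD => //; exact: Lfun1Z.
Qed.

Variables (Bstar : 'M[R]_(p, r)) (D : {set {set 'I_r}}) (gamma : R).

Definition response i c w := \sum_(j < p) X i j w * Bstar j c + eps i c w.

Definition noise_level := \sum_(i < n) \sum_(c < r) mean (fun w => eps i c w ^+ 2).

Lemma residualE (B : 'M[R]_(p, r)) i c w :
  response i c w - \sum_(j < p) X i j w * B j c = eps i c w - xdot i (col c (B - Bstar)) w.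
Proof.
rewrite /response /xdot.
under [in RHS]eq_bigr do rewrite !mxE mulrBr.
rewrite sumrB; ring.
Qed.

Lemma mean_fit (B : 'M[R]_(p, r)) :
  mean (fun w => \sum_(i < n) \sum_(c < r)
                   (response i c w - \sum_(j < p) X i j w * B j c) ^+ 2)
  = noise_level + n%:R * \sum_(c < r) bform G (col c (B - Bstar)) (col c (B - Bstar)).
Proof.
have L1_res i c : (fun w => (eps i c w - xdot i (col c (B - Bstar)) w) ^+ 2) \in L1.
  by apply: Lfun1_sqr; apply: Lfun2B; [exact: eps_L2|exact: xdot_L2].
under eq_fun do under eq_bigr do under eq_bigr do rewrite residualE.
rewrite mean_sum => [|i]; last exact: Lfun1_sum.
under eq_bigr => i _ do rewrite mean_sum //.
under eq_bigr do under eq_bigr do rewrite mean_sqr_noise_sub.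
under eq_bigr do rewrite big_split /=.
rewrite big_split /=; congr (_ + _).
by rewrite exchange_big mulr_sumr; apply: eq_bigr => c _; rewrite sum_mean_xdot_sqr.
Qed.

Lemma mean_penalty (B : 'M[R]_(p, r)) :
  mean (fun w => \sum_(Dq in D) #|Dq|%:R^-1 * \sum_(l in Dq) \sum_(m in Dq)
                   \sum_(i < n) (\sum_(j < p) X i j w * (B j l - B j m)) ^+ 2)
  = n%:R * \sum_(Dq in D) #|Dq|%:R^-1 * \sum_(l in Dq) \sum_(m in Dq)
                   bform G (col l B - col m B) (col l B - col m B).
Proof.
have xdotE l m i w : \sum_(j < p) X i j w * (B j l - B j m) = xdot i (col l B - col m B) w.
  by apply: eq_bigr => j _; rewrite !mxE.
have L1_i l m : (fun w => \sum_(i < n) xdot i (col l B - col m B) w ^+ 2) \in L1.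
  by apply: Lfun1_sum => i; exact: xdot_sqr_L1.
have L1_m (Dq : {set 'I_r}) l :
    (fun w => \sum_(m in Dq) \sum_(i < n) xdot i (col l B - col m B) w ^+ 2) \in L1.
  by apply: Lfun1_sum => m; exact: L1_i.
under eq_fun do under eq_bigr do under eq_bigr do under eq_bigr do
  under eq_bigr do rewrite xdotE.
rewrite mean_sum => [|Dq]; last by apply/Lfun1Z/Lfun1_sum => l; exact: L1_m.
rewrite mulr_sumr; apply: eq_bigr => Dq _.
rewrite meanZ; last by apply: Lfun1_sum => l; exact: L1_m.
rewrite mulrCA; congr (_ * _).
rewrite mean_sum => [|l]; last exact: L1_m.
rewrite mulr_sumr; apply: eq_bigr => l _.
rewrite mean_sum => [|m]; last exact: L1_i.
rewrite mulr_sumr; apply: eq_bigr => m _.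
by rewrite mean_sum ?sum_mean_xdot_sqr // => i; exact: xdot_sqr_L1.
Qed.

Lemma fit_L1 (B : 'M[R]_(p, r)) :
  (fun w => \sum_(i < n) \sum_(c < r)
              (response i c w - \sum_(j < p) X i j w * B j c) ^+ 2) \in L1.
Proof.
apply: Lfun1_sum => i; apply: Lfun1_sum => c; apply: Lfun1_sqr.
by under eq_fun do rewrite residualE; apply: Lfun2B; [exact: eps_L2|exact: xdot_L2].
Qed.

Lemma penalty_L1 (B : 'M[R]_(p, r)) :
  (fun w => \sum_(Dq in D) #|Dq|%:R^-1 * \sum_(l in Dq) \sum_(m in Dq)
              \sum_(i < n) (\sum_(j < p) X i j w * (B j l - B j m)) ^+ 2) \in L1.
Proof.
apply: Lfun1_sum => Dq; apply: Lfun1Z; apply: Lfun1_sum => l; apply: Lfun1_sum => m.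
apply: Lfun1_sum => i; apply: Lfun1_sqr.
by apply: Lfun2_sum => j; apply: Lfun2_mulr; exact: X_L2.
Qed.

Lemma obj_L1 (B : 'M[R]_(p, r)) : obj X response D gamma B \in L1.
Proof. by apply: rpredD; apply: Lfun1Z; [exact: fit_L1|exact: penalty_L1]. Qed.

Lemma mean_obj (B : 'M[R]_(p, r)) : mean (obj X response D gamma B) =
  (2 * n%:R)^-1 * noise_level + fused_risk G Bstar D gamma B / 2.
Proof.
have n_neq0 : n%:R != 0 :> R by rewrite pnatr_eq0 -lt0n.
rewrite meanD; [|exact/Lfun1Z/fit_L1|exact/Lfun1Z/penalty_L1].
rewrite !meanZ ?fit_L1 ?penalty_L1 // mean_fit mean_penalty /fused_risk.
by field; exact: n_neq0.
Qed.

Lemma fused_risk_le_of_mean_obj (B1 B2 : 'M[R]_(p, r)) :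
  ('E_P[obj X response D gamma B1] <= 'E_P[obj X response D gamma B2])%E ->
  fused_risk G Bstar D gamma B1 <= fused_risk G Bstar D gamma B2.
Proof. by rewrite !meanE ?obj_L1 // lee_fin !mean_obj; lra. Qed.

End linear_model.

Theorem corollary1 (R : realType) (d : measure_display) (T : measurableType d)
  (P : probability T R) (n p r s : nat)
  (X : 'I_n -> 'I_p -> T -> R) (eps : 'I_n -> 'I_r -> T -> R)
  (Bstar : 'M[R]_(p, r)) (D : {set {set 'I_r}}) (gamma : R)
  (Bac : 'M[R]_(p, r)) :
  (0 < n)%N ->
  nnz Bstar = s ->
  (forall i j, measurable_fun setT (X i j)) ->
  (forall i c, measurable_fun setT (eps i c)) ->
  (forall i j, P.-integrable setT (fun w => ((X i j w) ^+ 2)%:E)) ->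
  (forall i c, P.-integrable setT (fun w => ((eps i c w) ^+ 2)%:E)) ->
  (forall i c, ('E_P[eps i c] = 0)%E) ->
  indep_vec P (fun ij : 'I_n * 'I_p => X ij.1 ij.2)
              (fun ic : 'I_n * 'I_r => eps ic.1 ic.2) ->
  posdef (gram P X) ->
  finset.partition D [set: 'I_r] ->
  0 <= gamma ->
  let Y := fun i c w => \sum_(j < p) X i j w * Bstar j c + eps i c w in
  (forall B : 'M[R]_(p, r),
     ('E_P[obj X Y D gamma Bac] <= 'E_P[obj X Y D gamma B])%E) ->
  forall Dq, Dq \in D -> forall l, l \in Dq ->
    col l Bac = col l Bstar +
      (2 * gamma / ((1 + 2 * gamma) * #|Dq|%:R)) *:
        \sum_(c in Dq | c != l) (col c Bstar - col l Bstar).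
Proof.
move=> n_gt0 _ mX meps iX ieps eps_mean0 X_eps_indep [symG Gpos] partD gamma_ge0 Y Bac_min.
apply: (fused_risk_argmin _ Bstar D gamma partD symG Gpos Bac gamma_ge0) => B.
exact: (fused_risk_le_of_mean_obj P n_gt0 mX meps iX ieps eps_mean0 X_eps_indep).
Qed.
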